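(* Let $f:\mathbb{R}^n\to\mathbb{R}^n$ be smooth, $\varepsilon\ge 0$, $V\subseteq\mathbb{R}^n$ and $\Delta>0$ such that $R^{\Delta}_{f,\varepsilon}(V)\subseteq V$. Then for all $\Delta'\ge\Delta$, $$R_{f,\varepsilon}\big(R^{[0,\Delta']}_{f,\varepsilon}(V)\big)\subseteq R^{[0,\Delta']}_{f,\varepsilon}(V).$$
   Context: For $\varepsilon\ge 0$, an $\varepsilon$-solution of $\dot x=f(x)$ is a differentiable function $x:\mathbb{R}^{\ge0}\to\mathbb{R}^n$ with $\|f(x(t))-\dot x(t)\|\le\varepsilon$ for all $t\ge0$ (Euclidean norm). For $X\subseteq\mathbb{R}^n$, $T\subseteq\mathbb{R}^{\ge 0}$: $R^{T}_{f,\varepsilon}(X)=\{x(t)\mid t\in T,\ x\text{ an }\varepsilon\text{-solution with }x(0)\in X\}$; $R^{t}_{f,\varepsilon}(X)=R^{\{t\}}_{f,\varepsilon}(X)$; $R_{f,\varepsilon}(X)=R^{\mathbb{R}^{\ge0}}_{f,\varepsilon}(X)$. *)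

From Stdlib Require Import Reals Lra.
From Stdlib Require Vectors.Fin.
Open Scope R_scope.

Definition vec (n : nat) : Type := Fin.t n -> R.

Fixpoint sum_fin (n : nat) : (Fin.t n -> R) -> R :=
  match n with
  | O => fun _ => 0
  | S m => fun g => g Fin.F1 + sum_fin m (fun i => g (Fin.FS i))
  end.

Definition vsub {n : nat} (u v : vec n) : vec n := fun i => u i - v i.
Definition vadd {n : nat} (u v : vec n) : vec n := fun i => u i + v i.
Definition vscal {n : nat} (c : R) (u : vec n) : vec n := fun i => c * u i.

Definition vnorm {n : nat} (u : vec n) : R := sqrt (sum_fin n (fun i => (u i)^2)).

Definition e_basis {n : nat} (i : Fin.t n) : vec n :=
  fun j => if Fin.eq_dec i j then 1 else 0.

Definition vcontinuous {n : nat} (g : vec n -> R) : Prop :=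
  forall v eps, 0 < eps -> exists delta, 0 < delta /\
    forall w, vnorm (vsub w v) < delta -> Rabs (g w - g v) < eps.

Definition has_partial {n : nat} (g : vec n -> R) (i : Fin.t n) (v : vec n) (l : R) : Prop :=
  derivable_pt_lim (fun s => g (vadd v (vscal s (e_basis i)))) 0 l.

Fixpoint Ck {n : nat} (k : nat) (g : vec n -> R) : Prop :=
  vcontinuous g /\
  match k with
  | O => True
  | S k' => exists dg : Fin.t n -> vec n -> R,
      (forall i v, has_partial g i v (dg i v)) /\ (forall i, Ck k' (dg i))
  end.

Definition smooth {n : nat} (f : vec n -> vec n) : Prop :=
  forall (k : nat) (j : Fin.t n), Ck k (fun v => f v j).

Definition deriv_nonneg (y : R -> R) (t l : R) : Prop :=
  forall eps, 0 < eps -> exists delta, 0 < delta /\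
    forall h, h <> 0 -> 0 <= t + h -> Rabs h < delta ->
      Rabs ((y (t + h) - y t) / h - l) < eps.

(* x : R^{>=0} -> R^n (only values on [0,+oo) matter) is an eps-solution of x' = f(x) *)
Definition eps_solution {n : nat} (f : vec n -> vec n) (eps : R) (x : R -> vec n) : Prop :=
  exists dx : R -> vec n,
    (forall t, 0 <= t -> forall i, deriv_nonneg (fun s => x s i) t (dx t i)) /\
    (forall t, 0 <= t -> vnorm (vsub (f (x t)) (dx t)) <= eps).

Definition Reach {n : nat} (f : vec n -> vec n) (eps : R) (T : R -> Prop)
    (X : vec n -> Prop) : vec n -> Prop :=
  fun y => exists (x : R -> vec n) (t : R),
    0 <= t /\ T t /\ eps_solution f eps x /\ X (x 0) /\ y = x t.

(* Gluing an eps-solution from V that stops at time t <= Delta' to an eps-solution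
   started at its endpoint gives one eps-solution w from V that reaches y at some time T.
   By the invariance hypothesis every w (k Delta) lies in V, so restarting w at the last
   multiple of Delta before T reaches y within time Delta <= Delta'.

   The gluing is the only delicate point: the two velocities a and b at the junction
   may differ. Both are eps-close to f(p), so their mean is strictly inside that ball,
   with some slack k. Near the junction the curves are bent onto the chord of slope
   close to (a + b)/2, with weights of order s^b; f being locally Lipschitz (it is
   smooth), the errors this creates are paid for by k on a short enough junction. *)

From Stdlib Require Import Reals Lra FunctionalExtensionality Classical.
Open Scope R_scope.

Lemma sum_fin_ext n (g h : Fin.t n -> R) :
  (forall i, g i = h i) -> sum_fin n g = sum_fin n h.
Proof. intro H. f_equal. now apply functional_extensionality. Qed.

Lemma sum_fin_add n (g h : Fin.t n -> R) :
  sum_fin n (fun i => g i + h i) = sum_fin n g + sum_fin n h.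
Proof. induction n; simpl; [lra|]. rewrite IHn. lra. Qed.

Lemma sum_fin_scal n c (g : Fin.t n -> R) :
  sum_fin n (fun i => c * g i) = c * sum_fin n g.
Proof. induction n; simpl; [lra|]. rewrite IHn. lra. Qed.

Lemma sum_fin_const n c : sum_fin n (fun _ => c) = INR n * c.
Proof. induction n; simpl sum_fin; [simpl; lra|]. rewrite IHn, S_INR. lra. Qed.

Lemma sum_fin_le n (g h : Fin.t n -> R) :
  (forall i, g i <= h i) -> sum_fin n g <= sum_fin n h.
Proof.
  induction n as [|n IH]; simpl; intro H; [lra|].
  pose proof (H Fin.F1).
  assert (sum_fin n (fun i => g (Fin.FS i)) <= sum_fin n (fun i => h (Fin.FS i)))
    by (apply IH; intro; apply H).
  lra.
Qed.

Lemma sum_fin_ge0 n (g : Fin.t n -> R) : (forall i, 0 <= g i) -> 0 <= sum_fin n g.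
Proof.
  intro H. replace 0 with (sum_fin n (fun _ => 0)) by (rewrite sum_fin_const; ring).
  now apply sum_fin_le.
Qed.

Lemma sum_fin_term_le n (g : Fin.t n -> R) i :
  (forall j, 0 <= g j) -> g i <= sum_fin n g.
Proof.
  induction n as [|n IH]; [inversion i|]. intro H.
  pattern i; apply Fin.caseS'; simpl.
  - assert (0 <= sum_fin n (fun i => g (Fin.FS i))) by (apply sum_fin_ge0; intro; apply H).
    lra.
  - intro j. pose proof (H Fin.F1).
    assert (g (Fin.FS j) <= sum_fin n (fun i => g (Fin.FS i)))
      by (apply (IH (fun i => g (Fin.FS i))); intro; apply H).
    lra.
Qed.

(* The discriminant of the nonnegative quadratic [l |-> sum (a i + l b i)^2]. *)
Lemma cauchy_schwarz n (a b : Fin.t n -> R) :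
  (sum_fin n (fun i => a i * b i))^2
  <= sum_fin n (fun i => (a i)^2) * sum_fin n (fun i => (b i)^2).
Proof.
  set (A := sum_fin n (fun i => a i * b i)).
  set (P := sum_fin n (fun i => (a i)^2)).
  set (Q := sum_fin n (fun i => (b i)^2)).
  assert (Hq : forall l, 0 <= P + 2 * l * A + l^2 * Q).
  { intro l. replace (P + 2 * l * A + l^2 * Q) with (sum_fin n (fun i => (a i + l * b i)^2)).
    - apply sum_fin_ge0. intro; apply pow2_ge_0.
    - unfold P, A, Q. rewrite <- !sum_fin_scal, <- !sum_fin_add.
      apply sum_fin_ext. intro; ring. }
  assert (HQ : 0 <= Q) by (apply sum_fin_ge0; intro; apply pow2_ge_0).
  destruct (Req_dec Q 0) as [Q0|Q0].
  - rewrite Q0 in *. destruct (Req_dec A 0) as [A0|A0]; [rewrite A0; nra|].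
    specialize (Hq (- (P + 1) / (2 * A))).
    replace (2 * (- (P + 1) / (2 * A)) * A) with (- (P + 1)) in Hq by (field; auto).
    lra.
  - specialize (Hq (- A / Q)).
    replace (P + 2 * (- A / Q) * A + (- A / Q) ^ 2 * Q) with (P - A^2 / Q) in Hq
      by (field; auto).
    assert (HA : A^2 / Q * Q <= P * Q) by (apply Rmult_le_compat_r; lra).
    replace (A ^ 2 / Q * Q) with (A^2) in HA by (field; auto). lra.
Qed.

Lemma vnorm_ge0 n (u : vec n) : 0 <= vnorm u.
Proof. apply sqrt_pos. Qed.

Lemma vnorm_sq n (u : vec n) : (vnorm u)^2 = sum_fin n (fun i => (u i)^2).
Proof. apply pow2_sqrt, sum_fin_ge0. intro; apply pow2_ge_0. Qed.

Lemma vnorm_ext n (u v : vec n) : (forall i, u i = v i) -> vnorm u = vnorm v.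
Proof. intro H. f_equal. now apply functional_extensionality. Qed.

Lemma vnorm_le n (u : vec n) r :
  0 <= r -> sum_fin n (fun i => (u i)^2) <= r^2 -> vnorm u <= r.
Proof. intros. unfold vnorm. rewrite <- (sqrt_pow2 r) by auto. now apply sqrt_le_1_alt. Qed.

Lemma vnorm_scal n c (u : vec n) : vnorm (fun i => c * u i) = Rabs c * vnorm u.
Proof.
  unfold vnorm. rewrite (sum_fin_ext n _ (fun i => c^2 * (u i)^2)) by (intro; ring).
  rewrite sum_fin_scal, sqrt_mult_alt by apply pow2_ge_0.
  f_equal. rewrite <- sqrt_Rsqr_abs. f_equal. unfold Rsqr; ring.
Qed.

Lemma vnorm_opp n (u : vec n) : vnorm (fun i => - u i) = vnorm u.
Proof. unfold vnorm. f_equal. apply sum_fin_ext; intro; ring. Qed.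

Lemma vnorm_sub_sym n (u v : vec n) :
  vnorm (fun i => u i - v i) = vnorm (fun i => v i - u i).
Proof. rewrite <- vnorm_opp. apply vnorm_ext; intro; ring. Qed.

Lemma vnorm_zero n : vnorm (fun _ : Fin.t n => 0) = 0.
Proof.
  unfold vnorm. rewrite (sum_fin_ext n _ (fun _ => 0)) by (intro; ring).
  rewrite sum_fin_const, Rmult_0_r. apply sqrt_0.
Qed.

Lemma vnorm_triangle n (u v : vec n) : vnorm (fun i => u i + v i) <= vnorm u + vnorm v.
Proof.
  pose proof (vnorm_ge0 _ u); pose proof (vnorm_ge0 _ v).
  apply vnorm_le; [lra|].
  replace (sum_fin n (fun i => (u i + v i)^2))
    with (vnorm u ^ 2 + 2 * sum_fin n (fun i => u i * v i) + vnorm v ^ 2).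
  2:{ rewrite !vnorm_sq, <- sum_fin_scal, <- !sum_fin_add. apply sum_fin_ext; intro; ring. }
  pose proof (cauchy_schwarz n u v) as CS. rewrite <- !vnorm_sq in CS.
  set (s := sum_fin n (fun i => u i * v i)) in *.
  assert (s <= vnorm u * vnorm v).
  { destruct (Rle_dec s (vnorm u * vnorm v)) as [|Hs]; [auto|].
    assert (0 <= vnorm u * vnorm v) by nra.
    assert ((vnorm u * vnorm v)^2 < s^2) by nra. nra. }
  nra.
Qed.

Lemma vnorm_triangle_le n (u v : vec n) a b :
  vnorm u <= a -> vnorm v <= b -> vnorm (fun i => u i + v i) <= a + b.
Proof. pose proof (vnorm_triangle n u v). lra. Qed.

Lemma vnorm_sub_triangle n (u v w : vec n) :
  vnorm (fun i => u i - w i) <= vnorm (fun i => u i - v i) + vnorm (fun i => v i - w i).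
Proof. eapply Rle_trans; [|apply vnorm_triangle]. right. apply vnorm_ext; intro; ring. Qed.

Lemma vnorm_le_add_sub n (u v : vec n) : vnorm v <= vnorm u + vnorm (fun i => v i - u i).
Proof. eapply Rle_trans; [|apply vnorm_triangle]. right. apply vnorm_ext; intro; ring. Qed.

Lemma coord_le_vnorm n (u : vec n) i : Rabs (u i) <= vnorm u.
Proof.
  rewrite <- (sqrt_pow2 (Rabs (u i))) by apply Rabs_pos. apply sqrt_le_1_alt.
  rewrite RPow_abs, Rabs_pos_eq by apply pow2_ge_0.
  apply (sum_fin_term_le n (fun i => u i ^ 2)). intro; apply pow2_ge_0.
Qed.

Lemma vnorm_le_sum_abs n (u : vec n) : vnorm u <= sum_fin n (fun i => Rabs (u i)).
Proof.
  apply vnorm_le; [apply sum_fin_ge0; intro; apply Rabs_pos|].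
  induction n as [|n IH]; cbn [sum_fin]; [lra|].
  specialize (IH (fun i => u (Fin.FS i))). cbv beta in IH.
  assert (0 <= sum_fin n (fun i => Rabs (u (Fin.FS i))))
    by (apply sum_fin_ge0; intro; apply Rabs_pos).
  pose proof (Rabs_pos (u Fin.F1)).
  assert (u Fin.F1 ^ 2 = Rabs (u Fin.F1) ^ 2)
    by (rewrite <- !Rsqr_pow2; apply Rsqr_abs).
  nra.
Qed.

Lemma sum_abs_le_vnorm n (u : vec n) : sum_fin n (fun i => Rabs (u i)) <= INR n * vnorm u.
Proof. rewrite <- sum_fin_const. apply sum_fin_le. intro; apply coord_le_vnorm. Qed.

Lemma vnorm_le_coord_bound n (u : vec n) e :
  (forall i, Rabs (u i) <= e) -> vnorm u <= INR n * e.
Proof.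
  intro. eapply Rle_trans; [apply vnorm_le_sum_abs|].
  rewrite <- sum_fin_const. now apply sum_fin_le.
Qed.

Lemma vnorm_sub_gt0 n (a b : vec n) : a <> b -> 0 < vnorm (fun i => a i - b i).
Proof.
  intro H. destruct (classic (exists i, a i <> b i)) as [[i Hi]|Hn].
  - eapply Rlt_le_trans; [|apply (coord_le_vnorm _ _ i)]. apply Rabs_pos_lt. lra.
  - exfalso. apply H, functional_extensionality. intro i.
    apply NNPP. intro; apply Hn; eauto.
Qed.

Lemma parallelogram n (u v : vec n) :
  (vnorm (fun i => u i + v i))^2 + (vnorm (fun i => u i - v i))^2
  = 2 * (vnorm u)^2 + 2 * (vnorm v)^2.
Proof.
  rewrite !vnorm_sq, <- !sum_fin_scal, <- !sum_fin_add. apply sum_fin_ext; intro; ring.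
Qed.

Lemma midpoint_strict_in_ball n (c a b : vec n) eps :
  a <> b -> vnorm (fun i => c i - a i) <= eps -> vnorm (fun i => c i - b i) <= eps ->
  vnorm (fun i => c i - (a i + b i) / 2) < eps.
Proof.
  intros Hab Ha Hb.
  pose proof (parallelogram n (fun i => c i - a i) (fun i => c i - b i)) as P. cbv beta in P.
  replace (vnorm (fun i => c i - a i + (c i - b i)))
    with (2 * vnorm (fun i => c i - (a i + b i) / 2)) in P.
  2:{ replace 2 with (Rabs 2) at 1 by (apply Rabs_pos_eq; lra).
      rewrite <- vnorm_scal. apply vnorm_ext; intro; field. }
  replace (vnorm (fun i => c i - a i - (c i - b i))) with (vnorm (fun i => b i - a i)) in P
    by (apply vnorm_ext; intro; ring).
  pose proof (vnorm_sub_gt0 n b a (not_eq_sym Hab)).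
  pose proof (vnorm_ge0 _ (fun i => c i - a i)). pose proof (vnorm_ge0 _ (fun i => c i - b i)).
  pose proof (vnorm_ge0 _ (fun i => c i - (a i + b i) / 2)).
  nra.
Qed.

Lemma ball_convex n (a b p : vec n) r lam : 0 <= lam <= 1 ->
  vnorm (fun i => a i - p i) <= r -> vnorm (fun i => b i - p i) <= r ->
  vnorm (fun i => a i + lam * (b i - a i) - p i) <= r.
Proof.
  intros Hl Ha Hb.
  replace (vnorm (fun i => a i + lam * (b i - a i) - p i))
    with (vnorm (fun i => (1 - lam) * (a i - p i) + lam * (b i - p i)))
    by (apply vnorm_ext; intro; ring).
  eapply Rle_trans; [apply vnorm_triangle|].
  rewrite !vnorm_scal, !Rabs_pos_eq by lra. nra.
Qed.

Definition deriv_within (D : R -> Prop) (g : R -> R) (u l : R) : Prop :=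
  forall e, 0 < e -> exists delta, 0 < delta /\
    forall h, h <> 0 -> D (u + h) -> Rabs h < delta -> Rabs ((g (u + h) - g u) / h - l) < e.

Lemma deriv_within_mono (D D' : R -> Prop) g u l :
  (forall s, D s -> D' s) -> deriv_within D' g u l -> deriv_within D g u l.
Proof.
  intros HD H e He. destruct (H e He) as [d [Hd P]]. exists d. split; auto.
Qed.

Lemma deriv_within_ext (D : R -> Prop) g g' u l :
  (forall s, D s -> g s = g' s) -> D u -> deriv_within D g' u l -> deriv_within D g u l.
Proof.
  intros E Du H e He. destruct (H e He) as [d [Hd P]]. exists d. split; auto.
  intros h Hh Dh Ha. rewrite !E; auto.
Qed.

Lemma deriv_within_of_deriv (D : R -> Prop) g u l :
  derivable_pt_lim g u l -> deriv_within D g u l.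
Proof.
  intros H e He. destruct (H e He) as [d Hd]. exists d. split; [apply cond_pos|].
  intros h Hh _ Ha. now apply Hd.
Qed.

Lemma deriv_of_deriv_within (D : R -> Prop) g u l eta : 0 < eta ->
  (forall s, Rabs (s - u) < eta -> D s) -> deriv_within D g u l -> derivable_pt_lim g u l.
Proof.
  intros Heta HD H e He. destruct (H e He) as [d [Hd P]].
  assert (Hm : 0 < Rmin d eta) by (apply Rmin_pos; auto).
  exists (mkposreal _ Hm). simpl. intros h Hh Ha.
  pose proof (Rmin_l d eta); pose proof (Rmin_r d eta).
  apply P; [auto| |lra]. apply HD. replace (u + h - u) with h by ring. lra.
Qed.

Lemma deriv_of_deriv_nonneg g u l : 0 < u -> deriv_nonneg g u l -> derivable_pt_lim g u l.
Proof.
  intro Hu. apply (deriv_of_deriv_within (fun s => 0 <= s) g u l u Hu).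
  intros s Hs. apply Rabs_def2 in Hs. lra.
Qed.

Lemma deriv_within_far (D : R -> Prop) g u l eta : 0 < eta ->
  (forall s, D s -> eta <= Rabs (s - u)) -> deriv_within D g u l.
Proof.
  intros Heta HD e He. exists eta. split; auto. intros h _ Dh Ha.
  specialize (HD _ Dh). replace (u + h - u) with h in HD by ring. lra.
Qed.

Lemma deriv_within_union (D1 D2 : R -> Prop) g u l :
  deriv_within D1 g u l -> deriv_within D2 g u l ->
  deriv_within (fun s => D1 s \/ D2 s) g u l.
Proof.
  intros H1 H2 e He. destruct (H1 e He) as [d1 [Hd1 P1]]. destruct (H2 e He) as [d2 [Hd2 P2]].
  exists (Rmin d1 d2). split; [now apply Rmin_pos|].
  pose proof (Rmin_l d1 d2); pose proof (Rmin_r d1 d2).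
  intros h Hh [Dh|Dh] Ha; [apply P1|apply P2]; auto; lra.
Qed.

(* At [u <> c] the far piece imposes no condition; at [u = c] both one-sided
   conditions are needed. *)
Lemma deriv_within_concat a c (g dg : R -> R) :
  (forall u, a <= u <= c -> deriv_within (fun s => a <= s <= c) g u (dg u)) ->
  (forall u, c <= u -> deriv_within (fun s => c <= s) g u (dg u)) ->
  forall u, a <= u -> deriv_within (fun s => a <= s) g u (dg u).
Proof.
  intros H1 H2 u Hu.
  apply deriv_within_mono with (fun s => a <= s <= c \/ c <= s);
    [intros s Hs; lra|].
  apply deriv_within_union.
  - destruct (Rle_or_lt u c) as [Huc|Huc]; [now apply H1|].
    apply deriv_within_far with (u - c); [lra|].
    intros s Hs. rewrite Rabs_left1; lra.
  - destruct (Rle_or_lt c u) as [Huc|Huc]; [now apply H2|].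
    apply deriv_within_far with (c - u); [lra|].
    intros s Hs. rewrite Rabs_pos_eq; lra.
Qed.

Lemma deriv_within_shift (D : R -> Prop) g u c l :
  deriv_within D g (u - c) l -> deriv_within (fun s => D (s - c)) (fun s => g (s - c)) u l.
Proof.
  intros H e He. destruct (H e He) as [d [Hd P]]. exists d. split; auto.
  intros h Hh Dh Ha. replace (u + h - c) with (u - c + h) in * by ring. now apply P.
Qed.

Lemma deriv_within_cont (D : R -> Prop) g u l : deriv_within D g u l ->
  forall e, 0 < e -> exists eta, 0 < eta /\
    forall h, D (u + h) -> Rabs h < eta -> Rabs (g (u + h) - g u) <= e.
Proof.
  intros H e He. destruct (H 1 Rlt_0_1) as [d [Hd P]].
  pose proof (Rabs_pos l).
  exists (Rmin d (e / (Rabs l + 1))). split.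
  { apply Rmin_pos; auto. apply Rdiv_lt_0_compat; lra. }
  intros h Dh Hh. pose proof (Rmin_l d (e / (Rabs l + 1))); pose proof (Rmin_r d (e / (Rabs l + 1))).
  destruct (Req_dec h 0) as [->|Hh0].
  { rewrite Rplus_0_r, Rminus_diag, Rabs_R0. lra. }
  specialize (P h Hh0 Dh ltac:(lra)).
  replace (g (u + h) - g u) with (((g (u + h) - g u) / h - l) * h + l * h) by (field; lra).
  eapply Rle_trans; [apply Rabs_triang|]. rewrite !Rabs_mult.
  assert (Rabs h * (Rabs l + 1) <= e).
  { apply Rmult_le_reg_r with (/ (Rabs l + 1)); [apply Rinv_0_lt_compat; lra|].
    rewrite Rmult_assoc, Rinv_r, Rmult_1_r by lra. lra. }
  pose proof (Rabs_pos h). nra.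
Qed.

Lemma deriv_within_add_small (D : R -> Prop) g E u l eta (q : R -> R) :
  deriv_within D g u l -> E u = 0 -> 0 < eta ->
  (forall h, D (u + h) -> 0 < Rabs h < eta -> Rabs (E (u + h)) <= q (Rabs h) * Rabs h) ->
  (forall e, 0 < e -> exists e', 0 < e' /\ forall h, 0 < h < e' -> q h < e) ->
  deriv_within D (fun s => g s + E s) u l.
Proof.
  intros Hg E0 Heta HE Hq e He. destruct (Hg (e/2) ltac:(lra)) as [d [Hd P]].
  destruct (Hq (e/2) ltac:(lra)) as [e' [He' Pe']].
  exists (Rmin d (Rmin eta e')). split; [repeat apply Rmin_pos; auto|].
  intros h Hh Dh Ha. pose proof (Rmin_l d (Rmin eta e')); pose proof (Rmin_r d (Rmin eta e')).
  pose proof (Rmin_l eta e'); pose proof (Rmin_r eta e'). pose proof (Rabs_pos_lt h Hh).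
  replace ((g (u + h) + E (u + h) - (g u + E u)) / h - l)
    with (((g (u + h) - g u) / h - l) + E (u + h) / h) by (rewrite E0; field; lra).
  eapply Rle_lt_trans; [apply Rabs_triang|].
  assert (Rabs (E (u + h) / h) < e/2).
  { unfold Rdiv. rewrite Rabs_mult, Rabs_inv.
    apply Rmult_lt_reg_r with (Rabs h); [lra|]. rewrite Rmult_assoc, Rinv_l by lra.
    eapply Rle_lt_trans; [rewrite Rmult_1_r; apply HE; auto; lra|].
    apply Rmult_lt_compat_r; [lra|]. apply Pe'; lra. }
  specialize (P h Hh Dh ltac:(lra)). lra.
Qed.

Lemma right_deriv_tangent_extension g c l :
  deriv_within (fun s => c <= s) g c l ->
  derivable_pt_lim (fun u => if Rle_dec c u then g u else g c + l * (u - c)) c l.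
Proof.
  intros H e He. destruct (H e He) as [d [Hd P]].
  exists (mkposreal _ Hd). simpl. intros h Hh Ha.
  destruct (Rle_dec c (c + h)) as [Hch|Hch]; destruct (Rle_dec c c) as [_|Hcc]; try lra.
  - now apply P.
  - replace ((g c + l * (c + h - c) - g c) / h - l) with 0 by (field; lra).
    rewrite Rabs_R0; lra.
Qed.

Lemma deriv_ext g g' u l eta : 0 < eta ->
  (forall h, Rabs h < eta -> g (u + h) = g' (u + h)) ->
  derivable_pt_lim g' u l -> derivable_pt_lim g u l.
Proof.
  intros Heta E H e He. destruct (H e He) as [d Hd].
  assert (Hm : 0 < Rmin d eta) by (apply Rmin_pos; [apply cond_pos|auto]).
  exists (mkposreal _ Hm). simpl. intros h Hh Ha.
  pose proof (Rmin_l d eta); pose proof (Rmin_r d eta).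
  rewrite E by lra. rewrite <- (Rplus_0_r u) at 2. rewrite E, Rplus_0_r by (rewrite Rabs_R0; lra).
  apply Hd; auto. lra.
Qed.

Lemma deriv_shift g u c l :
  derivable_pt_lim g (u - c) l -> derivable_pt_lim (fun s => g (s - c)) u l.
Proof.
  intros H e He. destruct (H e He) as [d Hd]. exists d. intros h Hh Ha.
  replace (u + h - c) with (u - c + h) by ring. auto.
Qed.

Lemma abs_diff_le_of_deriv g g' a b B : a <= b ->
  (forall c, a <= c <= b -> derivable_pt_lim g c (g' c)) ->
  (forall c, a <= c <= b -> Rabs (g' c) <= B) -> Rabs (g b - g a) <= B * (b - a).
Proof.
  intros Hab Hd HB. destruct (Req_dec a b) as [<-|Hne].
  - rewrite !Rminus_diag, Rabs_R0, Rmult_0_r. lra.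
  - destruct (MVT_cor2 g g' a b) as [c [E Hc]]; [lra|auto|].
    rewrite E, Rabs_mult, (Rabs_pos_eq (b - a)) by lra.
    apply Rmult_le_compat_r; [lra|]. apply HB; lra.
Qed.

Lemma fin_exists_pos_forall n (P : Fin.t n -> R -> Prop) :
  (forall i d d', 0 < d' <= d -> P i d -> P i d') ->
  (forall i, exists d, 0 < d /\ P i d) ->
  exists d, 0 < d /\ forall i, P i d.
Proof.
  induction n as [|n IH]; intros Hm H.
  - exists 1. split; [lra|]. intro i; inversion i.
  - destruct (IH (fun i => P (Fin.FS i))) as [d1 [Hd1 P1]];
      [intros; eapply Hm; eauto|intro; apply H|].
    destruct (H Fin.F1) as [d0 [Hd0 P0]].
    pose proof (Rmin_l d0 d1); pose proof (Rmin_r d0 d1).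
    assert (0 < Rmin d0 d1) by (apply Rmin_pos; auto).
    exists (Rmin d0 d1). split; auto.
    intro i. pattern i; apply Fin.caseS'; [eapply Hm; [|eauto]; lra|].
    intro j. eapply Hm; [|apply P1]; lra.
Qed.

Lemma fin_exists_bound_forall n (P : Fin.t n -> R -> Prop) :
  (forall i B B', B <= B' -> P i B -> P i B') ->
  (forall i, exists B, P i B) ->
  exists B, 0 <= B /\ forall i, P i B.
Proof.
  induction n as [|n IH]; intros Hm H.
  - exists 0. split; [lra|]. intro i; inversion i.
  - destruct (IH (fun i => P (Fin.FS i))) as [B1 [HB1 P1]];
      [intros; eapply Hm; eauto|intro; apply H|].
    destruct (H Fin.F1) as [B0 P0].
    pose proof (Rmax_l B0 B1); pose proof (Rmax_r B0 B1).
    exists (Rmax B0 B1). split; [lra|].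
    intro i. pattern i; apply Fin.caseS'; [eapply Hm; [|eauto]; lra|].
    intro j. eapply Hm; [|apply P1]; lra.
Qed.

Definition cons_v {m} (a : R) (w : vec m) : vec (S m) :=
  fun j => Fin.caseS' j (fun _ => R) a w.

Lemma cons_v_eta m (v : vec (S m)) : v = cons_v (v Fin.F1) (fun j => v (Fin.FS j)).
Proof. apply functional_extensionality. intro j. pattern j; apply Fin.caseS'; reflexivity. Qed.

Lemma e_basis_FS_FS m (i j : Fin.t m) : @e_basis (S m) (Fin.FS i) (Fin.FS j) = e_basis i j.
Proof.
  unfold e_basis.
  destruct (Fin.eq_dec (Fin.FS i) (Fin.FS j)) as [E|E]; destruct (Fin.eq_dec i j) as [E'|E'];
    auto; [apply Fin.FS_inj in E|subst]; contradiction.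
Qed.

Lemma e_basis_FS_F1 m (i : Fin.t m) : @e_basis (S m) (Fin.FS i) Fin.F1 = 0.
Proof. unfold e_basis. destruct (Fin.eq_dec (Fin.FS i) Fin.F1) as [E|E]; auto. inversion E. Qed.

Lemma e_basis_F1_FS m (i : Fin.t m) : @e_basis (S m) Fin.F1 (Fin.FS i) = 0.
Proof. unfold e_basis. destruct (Fin.eq_dec Fin.F1 (Fin.FS i)) as [E|E]; auto. inversion E. Qed.

Lemma e_basis_F1_F1 m : @e_basis (S m) Fin.F1 Fin.F1 = 1.
Proof. unfold e_basis. destruct (Fin.eq_dec Fin.F1 Fin.F1) as [E|E]; auto. contradiction. Qed.

Definition in_box {n} (u v w : vec n) : Prop :=
  forall j, Rmin (u j) (v j) <= w j <= Rmax (u j) (v j).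

Lemma deriv_along_basis n (g : vec n -> R) dg i (u : vec n) s :
  (forall w, has_partial g i w (dg w)) ->
  derivable_pt_lim (fun r => g (fun j => u j + r * e_basis i j)) s
    (dg (fun j => u j + s * e_basis i j)).
Proof.
  intros Hp e He. destruct (Hp (fun j => u j + s * e_basis i j) e He) as [d Hd].
  exists d. intros h Hh Ha. specialize (Hd h Hh Ha).
  replace (fun j => u j + (s + h) * e_basis i j)
    with (vadd (fun j => u j + s * e_basis i j) (vscal (0 + h) (e_basis i)))
    by (apply functional_extensionality; intro; unfold vadd, vscal; ring).
  replace (fun j => u j + s * e_basis i j)
    with (vadd (fun j => u j + s * e_basis i j) (vscal 0 (e_basis i))) at 2
    by (apply functional_extensionality; intro; unfold vadd, vscal; ring).
  exact Hd.
Qed.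

Lemma lipschitz_first_coord m (g : vec (S m) -> R) dg B (u v : vec (S m)) :
  (forall w, has_partial g Fin.F1 w (dg w)) -> (forall w, in_box u v w -> Rabs (dg w) <= B) ->
  Rabs (g (cons_v (v Fin.F1) (fun j => u (Fin.FS j))) - g u)
  <= B * Rabs (v Fin.F1 - u Fin.F1).
Proof.
  intros Hp HB. set (a := v Fin.F1 - u Fin.F1).
  set (G := fun r => g (fun j => u j + r * e_basis Fin.F1 j)).
  assert (EG0 : G 0 = g u) by (unfold G; f_equal; apply functional_extensionality; intro; ring).
  assert (EGa : G a = g (cons_v (v Fin.F1) (fun j => u (Fin.FS j)))).
  { unfold G. f_equal. apply functional_extensionality; intro j. pattern j; apply Fin.caseS'.
    - simpl. rewrite e_basis_F1_F1. unfold a. ring.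
    - intro k. simpl. rewrite e_basis_F1_FS. ring. }
  assert (Hbox : forall r, Rmin 0 a <= r <= Rmax 0 a ->
            Rabs (dg (fun j => u j + r * e_basis Fin.F1 j)) <= B).
  { intros r Hr. apply HB. intro j. revert Hr. pattern j; apply Fin.caseS'.
    - rewrite e_basis_F1_F1. unfold a, Rmin, Rmax. repeat destruct Rle_dec; intros; lra.
    - intros k Hr. rewrite e_basis_F1_FS. unfold Rmin, Rmax. repeat destruct Rle_dec; lra. }
  rewrite <- EG0, <- EGa.
  assert (DG := fun r => deriv_along_basis (S m) g dg Fin.F1 u r Hp).
  destruct (Rle_dec 0 a).
  - rewrite (Rabs_pos_eq a) by auto. rewrite <- (Rminus_0_r a) at 2.
    apply abs_diff_le_of_deriv with (fun r => dg (fun j => u j + r * e_basis Fin.F1 j)); auto.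
    intros c Hc. apply Hbox. unfold Rmin, Rmax. repeat destruct Rle_dec; lra.
  - rewrite Rabs_minus_sym, (Rabs_left a), <- (Rminus_0_l a) by lra.
    apply abs_diff_le_of_deriv with (fun r => dg (fun j => u j + r * e_basis Fin.F1 j)); auto;
      [lra|].
    intros c Hc. apply Hbox. unfold Rmin, Rmax. repeat destruct Rle_dec; lra.
Qed.

(* Change one coordinate at a time and apply the mean value theorem along each edge. *)
Lemma lipschitz_of_partials_in_box n (g : vec n -> R) (dg : Fin.t n -> vec n -> R) B
  (u v : vec n) :
  (forall i w, has_partial g i w (dg i w)) -> (forall i w, in_box u v w -> Rabs (dg i w) <= B) ->
  Rabs (g v - g u) <= B * sum_fin n (fun i => Rabs (v i - u i)).
Proof.
  revert g dg u v. induction n as [|n IH]; intros g dg u v Hp HB.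
  - assert (v = u) by (apply functional_extensionality; intro i; inversion i). subst.
    simpl. rewrite Rminus_diag, Rabs_R0. lra.
  - set (g' := fun w' : vec n => g (cons_v (v Fin.F1) w')).
    assert (Step1 := lipschitz_first_coord n g (dg Fin.F1) B u v (Hp Fin.F1) (HB Fin.F1)).
    assert (Step2 : Rabs (g' (fun j => v (Fin.FS j)) - g' (fun j => u (Fin.FS j)))
                    <= B * sum_fin n (fun i => Rabs (v (Fin.FS i) - u (Fin.FS i)))).
    { apply IH with (fun i w' => dg (Fin.FS i) (cons_v (v Fin.F1) w')).
      - intros i w'. unfold has_partial, g'.
        replace (fun s => g (cons_v (v Fin.F1) (vadd w' (vscal s (e_basis i)))))
          with (fun s => g (vadd (cons_v (v Fin.F1) w') (vscal s (e_basis (Fin.FS i))))).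
        + apply Hp.
        + apply functional_extensionality; intro s. f_equal.
          apply functional_extensionality; intro j. pattern j; apply Fin.caseS';
            unfold vadd, vscal, cons_v; simpl.
          * rewrite e_basis_FS_F1. ring.
          * intro k. rewrite e_basis_FS_FS. ring.
      - intros i w' Hb. apply HB. intro j. pattern j; apply Fin.caseS'; unfold cons_v; simpl.
        + unfold Rmin, Rmax. repeat destruct Rle_dec; lra.
        + intro k. apply Hb. }
    assert (Ev : g v = g' (fun j => v (Fin.FS j))) by (unfold g'; f_equal; apply cons_v_eta).
    rewrite Ev. cbn [sum_fin]. unfold g' in *.
    match goal with |- Rabs (?A - ?C) <= _ =>
      replace (A - C) with ((A - g (cons_v (v Fin.F1) (fun j => u (Fin.FS j))))
                            + (g (cons_v (v Fin.F1) (fun j => u (Fin.FS j))) - C)) by ring end.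
    eapply Rle_trans; [apply Rabs_triang|]. lra.
Qed.

Lemma in_box_sq a b w p : Rmin a b <= w <= Rmax a b -> (w - p)^2 <= (a - p)^2 + (b - p)^2.
Proof.
  pose proof (pow2_ge_0 (a - p)); pose proof (pow2_ge_0 (b - p)).
  unfold Rmin, Rmax. destruct Rle_dec; intros; destruct (Rle_dec 0 (w - p)).
  - assert (0 <= w - p <= b - p) by lra. nra.
  - assert (a - p <= w - p < 0) by lra. nra.
  - assert (0 <= w - p <= a - p) by lra. nra.
  - assert (b - p <= w - p < 0) by lra. nra.
Qed.

Lemma in_box_ball n (u v w p : vec n) r :
  in_box u v w -> vnorm (fun i => u i - p i) <= r -> vnorm (fun i => v i - p i) <= r ->
  vnorm (fun i => w i - p i) <= sqrt 2 * r.
Proof.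
  intros Hw Hu Hv. pose proof (vnorm_ge0 _ (fun i => u i - p i)).
  assert (0 <= sqrt 2 * r) by (apply Rmult_le_pos; [apply sqrt_pos|lra]).
  apply vnorm_le; auto.
  rewrite Rpow_mult_distr, pow2_sqrt by lra.
  eapply Rle_trans; [apply sum_fin_le with (h := fun i => (u i - p i)^2 + (v i - p i)^2);
    intro; apply in_box_sq, Hw|].
  rewrite sum_fin_add, <- !vnorm_sq.
  assert (vnorm (fun i => u i - p i) ^ 2 <= r ^ 2) by (apply pow_incr; lra).
  assert (vnorm (fun i => v i - p i) ^ 2 <= r ^ 2) by (apply pow_incr; pose proof (vnorm_ge0 _ (fun i => v i - p i)); lra).
  lra.
Qed.

(* Continuous partials are bounded near [p]; the box spanned by two points of the
   ball of radius [d/2] stays in the ball of radius [d]. *)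
Lemma C1_locally_lipschitz n (g : vec n -> R) (p : vec n) : Ck 1 g ->
  exists r B, 0 < r /\ forall u v,
    vnorm (fun i => u i - p i) <= r -> vnorm (fun i => v i - p i) <= r ->
    Rabs (g u - g v) <= B * vnorm (fun i => u i - v i).
Proof.
  intros [_ [dg [Hp Hc]]].
  destruct (fin_exists_pos_forall n (fun i d => forall w, vnorm (fun k => w k - p k) < d ->
              Rabs (dg i w) <= Rabs (dg i p) + 1)) as [d [Hd Pd]].
  { intros i d0 d' Hd' H w Hw. apply H. lra. }
  { intro i. destruct (Hc i) as [Hci _]. destruct (Hci p 1) as [d0 [Hd0 P0]]; [lra|].
    exists d0. split; auto. intros w Hw. specialize (P0 w Hw).
    pose proof (Rabs_triang_inv (dg i w) (dg i p)). lra. }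
  destruct (fin_exists_bound_forall n (fun i B => Rabs (dg i p) + 1 <= B)) as [B [HB0 PB]];
    [intros; lra|intro i; exists (Rabs (dg i p) + 1); lra|].
  assert (Hs2 : sqrt 2 < 2).
  { rewrite <- (sqrt_pow2 2) at 2 by lra. apply sqrt_lt_1_alt. lra. }
  exists (d / 2), (B * INR n). split; [lra|]. intros u v Hu Hv.
  rewrite Rabs_minus_sym.
  eapply Rle_trans; [apply lipschitz_of_partials_in_box with (dg := dg) (B := B); auto|].
  - intros i w Hw. eapply Rle_trans; [|apply (PB i)]. apply Pd.
    eapply Rle_lt_trans; [apply (in_box_ball n u v w p (d / 2)); auto|].
    pose proof (sqrt_pos 2). nra.
  - rewrite Rmult_assoc. apply Rmult_le_compat_l; [lra|].
    rewrite vnorm_sub_sym. apply sum_abs_le_vnorm.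
Qed.

Lemma smooth_locally_lipschitz n (f : vec n -> vec n) (p : vec n) : smooth f ->
  exists r L, 0 < r /\ 0 <= L /\ forall u v,
    vnorm (fun i => u i - p i) <= r -> vnorm (fun i => v i - p i) <= r ->
    vnorm (fun j => f u j - f v j) <= L * vnorm (fun i => u i - v i).
Proof.
  intro Hs.
  set (Lip := fun j r B => forall u v,
    vnorm (fun i => u i - p i) <= r -> vnorm (fun i => v i - p i) <= r ->
    Rabs (f u j - f v j) <= B * vnorm (fun i => u i - v i)).
  destruct (fin_exists_pos_forall n (fun j r => exists B, Lip j r B)) as [r [Hr Pr]].
  { intros j d d' Hd [B HB]. exists B. intros u v Hu Hv. apply HB; lra. }
  { intro j. destruct (C1_locally_lipschitz n (fun v => f v j) p (Hs 1%nat j)) as [r [B [Hr P]]].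
    exists r. split; auto. exists B. exact P. }
  destruct (fin_exists_bound_forall n (fun j B => Lip j r B)) as [B [HB0 PB]]; [|apply Pr|].
  { intros j B B' HB H u v Hu Hv. eapply Rle_trans; [apply H; auto|].
    apply Rmult_le_compat_r; [apply vnorm_ge0|auto]. }
  exists r, (INR n * B). split; auto. split; [apply Rmult_le_pos; auto; apply pos_INR|].
  intros u v Hu Hv. eapply Rle_trans; [apply vnorm_le_sum_abs|].
  eapply Rle_trans; [apply sum_fin_le with (h := fun _ => B * vnorm (fun i => u i - v i));
    intro j; apply PB; auto|].
  rewrite sum_fin_const. lra.
Qed.

Definition powp (b s : R) : R := if Rle_dec s 0 then 0 else exp (b * ln s).

(* A transition from 0 to 1 on [0, 1] with [s * ramp' s <= 2 b ramp s]: for small [b]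
   its logarithmic derivative is small, which is what the blending below needs. *)
Definition ramp (b s : R) : R := 1 - (1 - powp b s)^2.
Definition ramp' (b s : R) : R := 2 * (1 - powp b s) * (b * powp b s / s).

Lemma powp_ge0 b s : 0 <= powp b s.
Proof. unfold powp. destruct Rle_dec; [lra|]. left; apply exp_pos. Qed.

Lemma powp_gt0 b s : 0 < s -> 0 < powp b s.
Proof. intros. unfold powp. destruct Rle_dec; [lra|]. apply exp_pos. Qed.

Lemma powp_le1 b s : 0 < b -> s <= 1 -> powp b s <= 1.
Proof.
  intros Hb Hs. unfold powp. destruct Rle_dec; [lra|]. rewrite <- exp_0.
  destruct (Req_dec s 1) as [->|Hs1]; [rewrite ln_1, Rmult_0_r; lra|].
  left. apply exp_increasing.
  assert (ln s < 0) by (rewrite <- ln_1; apply ln_increasing; lra). nra.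
Qed.

Lemma powp_1 b : powp b 1 = 1.
Proof. unfold powp. destruct Rle_dec; [lra|]. now rewrite ln_1, Rmult_0_r, exp_0. Qed.

Lemma powp_nonpos b s : s <= 0 -> powp b s = 0.
Proof. intro. unfold powp. destruct Rle_dec; [auto|lra]. Qed.

Lemma powp_small b e : 0 < b -> 0 < e -> exists eta, 0 < eta /\ forall s, s < eta -> powp b s < e.
Proof.
  intros Hb He. exists (exp (ln e / b)). split; [apply exp_pos|]. intros s Hs.
  unfold powp. destruct Rle_dec; [lra|].
  rewrite <- (exp_ln e) by auto. apply exp_increasing.
  assert (ln s < ln e / b) by (rewrite <- (ln_exp (ln e / b)); apply ln_increasing; lra).
  apply Rmult_lt_compat_l with (r := b) in H; auto.
  replace (b * (ln e / b)) with (ln e) in H by (field; lra). auto.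
Qed.

Lemma deriv_affine c d x : derivable_pt_lim (fun u => c * u + d) x c.
Proof.
  intros e He. exists (mkposreal 1 Rlt_0_1). intros h Hh _.
  replace ((c * (x + h) + d - (c * x + d)) / h - c) with 0 by (field; auto).
  rewrite Rabs_R0; auto.
Qed.

Lemma powp_deriv b s : 0 < s -> derivable_pt_lim (powp b) s (b * powp b s / s).
Proof.
  intro Hs. apply deriv_ext with (g' := fun s => exp (b * ln s)) (eta := s); auto.
  { intros h Hh. unfold powp. destruct Rle_dec; auto. apply Rabs_def2 in Hh. lra. }
  replace (b * powp b s / s) with ((b * / s) * exp (b * ln s))
    by (unfold powp; destruct Rle_dec; [lra|field; lra]).
  change (fun s0 => exp (b * ln s0)) with (comp exp (fun s0 => b * ln s0)).
  rewrite Rmult_comm. apply derivable_pt_lim_comp; [|apply derivable_pt_lim_exp].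
  change (fun s0 => b * ln s0) with (mult_real_fct b ln).
  apply derivable_pt_lim_scal, derivable_pt_lim_ln; auto.
Qed.

Lemma ramp_deriv b s : 0 < s -> derivable_pt_lim (ramp b) s (ramp' b s).
Proof.
  intro Hs. unfold ramp, ramp'.
  apply deriv_ext with (g' := fun s => 1 - (1 - powp b s) * (1 - powp b s)) (eta := 1);
    [lra|intros; ring|].
  replace (2 * (1 - powp b s) * (b * powp b s / s))
    with (0 - ((0 - b * powp b s / s) * (1 - powp b s) + (1 - powp b s) * (0 - b * powp b s / s)))
    by ring.
  apply (derivable_pt_lim_minus (fct_cte 1)); [apply derivable_pt_lim_const|].
  apply (derivable_pt_lim_mult (fun s => 1 - powp b s) (fun s => 1 - powp b s));
    apply (derivable_pt_lim_minus (fct_cte 1) (powp b));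
    auto using derivable_pt_lim_const, powp_deriv.
Qed.

Lemma ramp_range b s : 0 < b -> s <= 1 -> 0 <= ramp b s <= 1.
Proof. intros. unfold ramp. pose proof (powp_ge0 b s). pose proof (powp_le1 b s H H0). nra. Qed.

Lemma ramp_nonpos b s : s <= 0 -> ramp b s = 0.
Proof. intro. unfold ramp. rewrite powp_nonpos by auto. ring. Qed.

Lemma ramp_1 b : ramp b 1 = 1.
Proof. unfold ramp. rewrite powp_1. ring. Qed.

Lemma ramp'_1 b : ramp' b 1 = 0.
Proof. unfold ramp'. rewrite powp_1. ring. Qed.

Lemma ramp_le_powp b s : 0 < b -> s <= 1 -> ramp b s <= 2 * powp b s.
Proof. intros. unfold ramp. pose proof (powp_ge0 b s). pose proof (powp_le1 b s H H0). nra. Qed.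

Lemma ramp'_bound b s : 0 < b -> 0 < s <= 1 -> 0 <= ramp' b s /\ ramp' b s * s <= 2 * b * ramp b s.
Proof.
  intros Hb Hs. unfold ramp', ramp.
  pose proof (powp_gt0 b s (proj1 Hs)). pose proof (powp_le1 b s Hb (proj2 Hs)).
  set (q := powp b s) in *. split.
  - apply Rmult_le_pos; [nra|]. apply Rmult_le_pos; [nra|]. left; apply Rinv_0_lt_compat; lra.
  - replace (2 * (1 - q) * (b * q / s) * s) with (2 * (1 - q) * b * q) by (field; lra). nra.
Qed.

Lemma ramp_scaled_deriv b a c u : c <> 0 -> 0 < (u - a) / c ->
  derivable_pt_lim (fun s => ramp b ((s - a) / c)) u (ramp' b ((u - a) / c) / c).
Proof.
  intros Hc Hu.
  apply deriv_ext with (g' := comp (ramp b) (fun s => / c * s + (- a / c))) (eta := 1);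
    [lra|intros; unfold comp; f_equal; field; auto|].
  unfold Rdiv at 2.
  replace ((u - a) / c) with (/ c * u + - a / c) by (field; auto).
  apply derivable_pt_lim_comp; [apply deriv_affine|apply ramp_deriv].
  replace (/ c * u + - a / c) with ((u - a) / c) by (field; auto). auto.
Qed.

Definition piecewise {n} (c : R) (g1 g2 : R -> vec n) : R -> vec n :=
  fun u => if Rle_dec u c then g1 u else g2 u.

Lemma piecewise_le {n} c (g1 g2 : R -> vec n) u : u <= c -> piecewise c g1 g2 u = g1 u.
Proof. intro. unfold piecewise. destruct Rle_dec; auto; lra. Qed.

Lemma piecewise_gt {n} c (g1 g2 : R -> vec n) u : c < u -> piecewise c g1 g2 u = g2 u.
Proof. intro. unfold piecewise. destruct Rle_dec; auto; lra. Qed.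

Lemma vnorm_sub_le_of_deriv n (x dx : R -> vec n) a c B : a <= c ->
  (forall u, a <= u <= c -> forall i, derivable_pt_lim (fun s => x s i) u (dx u i)) ->
  (forall u, a <= u <= c -> vnorm (dx u) <= B) ->
  vnorm (fun i => x c i - x a i) <= INR n * B * (c - a).
Proof.
  intros Hac Hd HB. eapply Rle_trans; [apply vnorm_le_sum_abs|].
  eapply Rle_trans; [apply sum_fin_le with (h := fun _ => B * (c - a)); intro i|].
  - apply (abs_diff_le_of_deriv (fun s => x s i) (fun u => dx u i)); auto.
    intros u Hu. eapply Rle_trans; [apply coord_le_vnorm|auto].
  - rewrite sum_fin_const. lra.
Qed.

Lemma deriv_within_piece {n} (D : R -> Prop) (w dw g dg : R -> vec n) i u :
  (forall s, D s -> w s = g s /\ dw s = dg s) -> D u ->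
  deriv_within D (fun s => g s i) u (dg u i) -> deriv_within D (fun s => w s i) u (dw u i).
Proof.
  intros E Du H. destruct (E u Du) as [_ ->].
  apply deriv_within_ext with (fun s => g s i); auto. intros s Ds. now rewrite (proj1 (E s Ds)).
Qed.

Definition blend {n} (g L : R -> vec n) (wt : R -> R) : R -> vec n :=
  fun u i => g u i + wt u * (L u i - g u i).
Definition blend' {n} (g dg L : R -> vec n) (m : vec n) (wt wt' : R -> R) : R -> vec n :=
  fun u i => dg u i + wt u * (m i - dg u i) + wt' u * (L u i - g u i).

Lemma blend_deriv (g wt : R -> R) a t0 c u g' wt' :
  derivable_pt_lim g u g' -> derivable_pt_lim wt u wt' ->
  derivable_pt_lim (fun s => g s + wt s * ((a + (s - t0) * c) - g s)) u
    (g' + wt u * (c - g') + wt' * ((a + (u - t0) * c) - g u)).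
Proof.
  intros Hg Hw.
  assert (Hl : derivable_pt_lim (fun s => a + (s - t0) * c) u c).
  { apply deriv_ext with (g' := fun s => c * s + (a - t0 * c)) (eta := 1);
      [lra|intros; ring|apply deriv_affine]. }
  replace (g' + wt u * (c - g') + wt' * (a + (u - t0) * c - g u))
    with (g' + (wt' * (a + (u - t0) * c - g u) + wt u * (c - g'))) by ring.
  apply derivable_pt_lim_plus; auto.
  apply (derivable_pt_lim_mult wt (fun s => a + (s - t0) * c - g s)); auto.
  now apply derivable_pt_lim_minus.
Qed.

(* Convex combination of the two estimates at [X] (weight [1 - w]) and at [Lv] (weight
   [w]); the Lipschitz errors and the weight-derivative term are paid by the slack
   [k/2] available at [Lv], which enters with weight [w]. *)
Lemma blend_velocity_bound n (FW FX FL X X' Lv Lv' : vec n) w w' eps k L :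
  0 <= w <= 1 -> 0 <= L ->
  vnorm (fun i => FX i - X' i) <= eps -> vnorm (fun i => FL i - Lv' i) <= eps - k/2 ->
  vnorm (fun i => FW i - FX i) <= L * vnorm (fun i => (X i + w * (Lv i - X i)) - X i) ->
  vnorm (fun i => FW i - FL i) <= L * vnorm (fun i => (X i + w * (Lv i - X i)) - Lv i) ->
  2 * L * vnorm (fun i => Lv i - X i) <= k/4 ->
  Rabs w' * vnorm (fun i => Lv i - X i) <= w * k / 4 ->
  vnorm (fun i => FW i - (X' i + w * (Lv' i - X' i) + w' * (Lv i - X i))) <= eps.
Proof.
  intros Hw HL H1 H2 H3 H4 H5 H6.
  set (D := vnorm (fun i => Lv i - X i)) in *.
  assert (HD : 0 <= D) by apply vnorm_ge0.
  replace (vnorm (fun i => (X i + w * (Lv i - X i)) - X i)) with (w * D) in H3.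
  2:{ unfold D. rewrite <- (Rabs_pos_eq w) at 1 by lra. rewrite <- vnorm_scal.
      apply vnorm_ext; intro; ring. }
  replace (vnorm (fun i => (X i + w * (Lv i - X i)) - Lv i)) with ((1 - w) * D) in H4.
  2:{ unfold D. rewrite <- (Rabs_pos_eq (1 - w)) at 1 by lra. rewrite <- vnorm_scal, <- vnorm_opp.
      apply vnorm_ext; intro; ring. }
  replace (fun i => FW i - (X' i + w * (Lv' i - X' i) + w' * (Lv i - X i)))
    with (fun i => (1 - w) * (FX i - X' i) + w * (FL i - Lv' i) + (1 - w) * (FW i - FX i)
                   + w * (FW i - FL i) + (- w') * (Lv i - X i))
    by (apply functional_extensionality; intro; ring).
  eapply Rle_trans.
  { repeat apply vnorm_triangle_le;
      rewrite vnorm_scal; apply Rmult_le_compat_l; try apply Rabs_pos; eauto; apply Rle_refl. }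
  rewrite Rabs_Ropp, (Rabs_pos_eq (1 - w)), (Rabs_pos_eq w) by lra. fold D.
  assert (w * (2 * L * D) <= w * (k/4)) by (apply Rmult_le_compat_l; lra).
  assert (0 <= w * w * (2 * L * D)) by (apply Rmult_le_pos; nra).
  nra.
Qed.

Lemma ramp'_nonpos b s : s <= 0 -> ramp' b s = 0.
Proof. intro. unfold ramp'. rewrite powp_nonpos by auto. unfold Rdiv. ring. Qed.

Lemma powp_tends_to_0 b d K : 0 < b -> 0 < d -> 0 <= K ->
  forall e, 0 < e -> exists e', 0 < e' /\ forall h, 0 < h < e' -> 2 * powp b (h / d) * K < e.
Proof.
  intros Hb Hd HK e He.
  destruct (powp_small b (e / (2 * (K + 1))) Hb) as [eta [Heta Peta]];
    [apply Rdiv_lt_0_compat; lra|].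
  exists (eta * d). split; [nra|]. intros h Hh.
  assert (Hhd : h / d < eta).
  { apply Rmult_lt_reg_r with d; [lra|]. unfold Rdiv. rewrite Rmult_assoc, Rinv_l; lra. }
  specialize (Peta _ Hhd). pose proof (powp_ge0 b (h / d)).
  assert (2 * powp b (h / d) * (K + 1) < e).
  { apply Rmult_lt_reg_r with (/ (2 * (K + 1))); [apply Rinv_0_lt_compat; lra|].
    replace (2 * powp b (h / d) * (K + 1) * / (2 * (K + 1))) with (powp b (h / d))
      by (field; lra). auto. }
  nra.
Qed.

(* At the point where the weight vanishes, moving [g] towards [lin] by a weight of order
   [|h|^b] costs [O(|h|^(1+b))]: the derivative is that of [g]. *)
Lemma deriv_within_blend_edge (D : R -> Prop) (g wt lin : R -> R) c l eta b d K :
  derivable_pt_lim g c l -> wt c = 0 -> 0 < eta -> 0 < b -> 0 < d -> 0 <= K ->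
  (forall h, D (c + h) -> 0 < Rabs h < eta -> 0 <= wt (c + h) <= 2 * powp b (Rabs h / d)) ->
  (forall h, D (c + h) -> 0 < Rabs h < eta -> Rabs (lin (c + h) - g (c + h)) <= K * Rabs h) ->
  deriv_within D (fun s => g s + wt s * (lin s - g s)) c l.
Proof.
  intros Hg W0 Heta Hb Hd HK Hw Hlin.
  apply deriv_within_add_small with eta (fun h => 2 * powp b (h / d) * K); auto.
  - now apply deriv_within_of_deriv.
  - rewrite W0. ring.
  - intros h Dh Hh. specialize (Hw h Dh Hh). specialize (Hlin h Dh Hh).
    pose proof (Rabs_pos (lin (c + h) - g (c + h))). pose proof (Rabs_pos h).
    rewrite Rabs_mult, (Rabs_pos_eq (wt (c + h))) by lra.
    apply Rle_trans with (wt (c + h) * (K * Rabs h)); [apply Rmult_le_compat_l; lra|].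
    replace (2 * powp b (Rabs h / d) * K * Rabs h) with (2 * powp b (Rabs h / d) * (K * Rabs h))
      by ring.
    apply Rmult_le_compat_r; [nra|lra].
  - now apply powp_tends_to_0.
Qed.

Section Junction.

Variables (n : nat) (f : vec n -> vec n) (eps : R) (x dx z dz : R -> vec n).
Variables (t d b k L r Mb : R) (m : vec n).

Hypothesis Dx : forall u, 0 <= u -> forall i, deriv_nonneg (fun s => x s i) u (dx u i).
Hypothesis Bx : forall u, 0 <= u -> vnorm (fun i => f (x u) i - dx u i) <= eps.
Hypothesis Dz : forall u, 0 <= u -> forall i, deriv_nonneg (fun s => z s i) u (dz u i).
Hypothesis Bz : forall u, 0 <= u -> vnorm (fun i => f (z u) i - dz u i) <= eps.
Hypothesis Hd : 0 < d < t.
Hypothesis Hm : forall i, x (t - d) i + 2 * d * m i = z d i.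
Hypothesis HL : 0 <= L.
Hypothesis Hlip : forall u v,
  vnorm (fun i => u i - x t i) <= r -> vnorm (fun i => v i - x t i) <= r ->
  vnorm (fun i => f u i - f v i) <= L * vnorm (fun i => u i - v i).
Hypothesis Hxball : forall c, t - d <= c <= t -> vnorm (fun i => x c i - x t i) <= r.
Hypothesis Hzball : forall c, 0 <= c <= d -> vnorm (fun i => z c i - x t i) <= r.
Hypothesis Hslack : forall q, vnorm (fun i => q i - x t i) <= r ->
  vnorm (fun i => f q i - m i) <= eps - k/2.
Hypothesis HLr : 4 * L * r <= k/4.
Hypothesis HMb : forall q, vnorm (fun i => q i - x t i) <= r -> vnorm (f q) + eps <= Mb.
Hypothesis Hmb : vnorm m <= Mb.
Hypothesis Hb : 0 < b.
Hypothesis Hbk : 2 * b * (Mb * (1 + INR n)) <= k/4.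

(* On [t0, t] the curve [x] is moved onto the chord of slope [m] from [x t0] to
   [z d], on [t, t1] the chord is moved back onto the shifted curve [zt]. *)
Let t0 := t - d.
Let t1 := t + d.
(* [chord - x] and [chord - zt] grow at rate at most [K]; the factor [n] comes from the
   coordinatewise mean value bound. *)
Let K := Mb * (1 + INR n).
Let chord : R -> vec n := fun u i => x t0 i + (u - t0) * m i.
Let up u := ramp b ((u - t0) / d).
Let up' u := ramp' b ((u - t0) / d) / d.
Let down u := ramp b ((u - t1) / - d).
Let down' u := ramp' b ((u - t1) / - d) / - d.
Let zt u := z (u - t).
Let dzt u := dz (u - t).
Let into_chord := blend x chord up.
Let into_chord' := blend' x dx chord m up up'.
Let off_chord := blend zt chord down.
Let off_chord' := blend' zt dzt chord m down down'.

Lemma K_ge0 : 0 <= K.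
Proof.
  unfold K. pose proof (vnorm_ge0 _ m). pose proof (pos_INR n).
  apply Rmult_le_pos; lra.
Qed.

Lemma chord_in_ball u : t0 <= u <= t1 -> vnorm (fun i => chord u i - x t i) <= r.
Proof.
  intro Hu.
  replace (vnorm (fun i => chord u i - x t i))
    with (vnorm (fun i => x t0 i + ((u - t0) / (2 * d)) * (z d i - x t0 i) - x t i)).
  2:{ apply vnorm_ext. intro i. unfold chord. rewrite <- (Hm i). fold t0. field. lra. }
  apply ball_convex; unfold t0, t1 in *.
  - split; [apply Rmult_le_pos; [lra|left; apply Rinv_0_lt_compat; lra]|].
    apply Rmult_le_reg_r with (2 * d); [lra|].
    unfold Rdiv. rewrite Rmult_assoc, Rinv_l; lra.
  - apply Hxball; lra.
  - apply Hzball; lra.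
Qed.

Lemma up_left u : u <= t0 -> up u = 0 /\ up' u = 0.
Proof.
  intro. assert ((u - t0) / d <= 0).
  { unfold Rdiv. assert (0 < / d) by (apply Rinv_0_lt_compat; lra). nra. }
  unfold up, up'. rewrite ramp_nonpos, ramp'_nonpos by auto. split; [auto|unfold Rdiv; ring].
Qed.

Lemma down_right u : t1 <= u -> down u = 0 /\ down' u = 0.
Proof.
  intro. assert ((u - t1) / - d <= 0).
  { replace ((u - t1) / - d) with ((t1 - u) / d) by (field; lra).
    unfold Rdiv. assert (0 < / d) by (apply Rinv_0_lt_compat; lra). nra. }
  unfold down, down'. rewrite ramp_nonpos, ramp'_nonpos by auto. split; [auto|unfold Rdiv; ring].
Qed.

Lemma up_t : up t = 1 /\ up' t = 0.
Proof.
  unfold up, up', t0. replace ((t - (t - d)) / d) with 1 by (field; lra).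
  rewrite ramp_1, ramp'_1. split; [auto|unfold Rdiv; ring].
Qed.

Lemma down_t : down t = 1 /\ down' t = 0.
Proof.
  unfold down, down', t1. replace ((t - (t + d)) / - d) with 1 by (field; lra).
  rewrite ramp_1, ramp'_1. split; [auto|unfold Rdiv; ring].
Qed.

Lemma up_range u : u <= t -> 0 <= up u <= 1.
Proof.
  intro. unfold up. apply ramp_range; auto.
  apply Rmult_le_reg_r with d; [lra|]. unfold Rdiv. rewrite Rmult_assoc, Rinv_l; unfold t0; lra.
Qed.

Lemma down_range u : t <= u -> 0 <= down u <= 1.
Proof.
  intro. unfold down. apply ramp_range; auto.
  replace ((u - t1) / - d) with ((t1 - u) / d) by (field; lra).
  apply Rmult_le_reg_r with d; [lra|]. unfold Rdiv. rewrite Rmult_assoc, Rinv_l; unfold t1; lra.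
Qed.

Lemma up_le_powp h : 0 < h <= d -> up (t0 + h) <= 2 * powp b (h / d).
Proof.
  intro. unfold up. replace (t0 + h - t0) with h by ring. apply ramp_le_powp; auto.
  apply Rmult_le_reg_r with d; [lra|]. unfold Rdiv. rewrite Rmult_assoc, Rinv_l; lra.
Qed.

Lemma down_le_powp h : 0 < h <= d -> down (t1 - h) <= 2 * powp b (h / d).
Proof.
  intro. unfold down. replace ((t1 - h - t1) / - d) with (h / d) by (field; lra).
  apply ramp_le_powp; auto.
  apply Rmult_le_reg_r with d; [lra|]. unfold Rdiv. rewrite Rmult_assoc, Rinv_l; lra.
Qed.

Lemma up'_bound u : t0 < u <= t -> Rabs (up' u) * (u - t0) <= 2 * b * up u.
Proof.
  intro Hu. unfold up', up. set (s := (u - t0) / d).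
  assert (Hs : 0 < s <= 1).
  { unfold s. split; [apply Rdiv_lt_0_compat; lra|].
    apply Rmult_le_reg_r with d; [lra|]. unfold Rdiv. rewrite Rmult_assoc, Rinv_l; unfold t0 in *; lra. }
  destruct (ramp'_bound b s Hb Hs) as [H1 H2].
  rewrite Rabs_pos_eq by (apply Rmult_le_pos; [lra|left; apply Rinv_0_lt_compat; lra]).
  replace (ramp' b s / d * (u - t0)) with (ramp' b s * s) by (unfold s; field; lra). auto.
Qed.

Lemma down'_bound u : t <= u < t1 -> Rabs (down' u) * (t1 - u) <= 2 * b * down u.
Proof.
  intro Hu. unfold down', down. set (s := (u - t1) / - d).
  assert (Hs : 0 < s <= 1).
  { unfold s. replace ((u - t1) / - d) with ((t1 - u) / d) by (field; lra).
    split; [apply Rdiv_lt_0_compat; lra|].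
    apply Rmult_le_reg_r with d; [lra|]. unfold Rdiv. rewrite Rmult_assoc, Rinv_l; unfold t1 in *; lra. }
  destruct (ramp'_bound b s Hb Hs) as [H1 H2].
  replace (ramp' b s / - d) with (- (ramp' b s / d)) by (field; lra).
  rewrite Rabs_Ropp, Rabs_pos_eq by (apply Rmult_le_pos; [lra|left; apply Rinv_0_lt_compat; lra]).
  replace (ramp' b s / d * (t1 - u)) with (ramp' b s * s) by (unfold s; field; lra). auto.
Qed.

Lemma velocity_le_Mb (q v : vec n) : vnorm (fun i => q i - x t i) <= r ->
  vnorm (fun i => f q i - v i) <= eps -> vnorm v <= Mb.
Proof.
  intros Hq Hv. pose proof (HMb q Hq). pose proof (vnorm_le_add_sub n (f q) v).
  rewrite vnorm_sub_sym in Hv. lra.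
Qed.

Lemma chord_sub_x u : t0 <= u <= t -> vnorm (fun i => chord u i - x u i) <= K * (u - t0).
Proof.
  intro Hu.
  replace (fun i => chord u i - x u i)
    with (fun i => (u - t0) * m i + - (x u i - x t0 i))
    by (apply functional_extensionality; intro; unfold chord; ring).
  eapply Rle_trans; [apply vnorm_triangle|].
  rewrite vnorm_scal, vnorm_opp, Rabs_pos_eq by lra.
  assert (vnorm (fun i => x u i - x t0 i) <= INR n * Mb * (u - t0)).
  { apply (vnorm_sub_le_of_deriv n x dx); [lra| |].
    - intros c Hc i. apply deriv_of_deriv_nonneg; [unfold t0 in *; lra|]. apply Dx. unfold t0 in *; lra.
    - intros c Hc. apply velocity_le_Mb with (x c); [apply Hxball|apply Bx]; unfold t0 in *; lra. }
  assert ((u - t0) * vnorm m <= (u - t0) * Mb) by (apply Rmult_le_compat_l; lra).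
  unfold K. nra.
Qed.

Lemma chord_sub_zt u : t < u <= t1 -> vnorm (fun i => chord u i - zt u i) <= K * (t1 - u).
Proof.
  intro Hu.
  replace (fun i => chord u i - zt u i)
    with (fun i => (- (t1 - u)) * m i + (z d i - z (u - t) i)).
  2:{ apply functional_extensionality; intro i. unfold chord, zt. rewrite <- (Hm i).
      unfold t0, t1. ring. }
  eapply Rle_trans; [apply vnorm_triangle|].
  rewrite vnorm_scal, Rabs_Ropp, Rabs_pos_eq by lra.
  assert (vnorm (fun i => z d i - z (u - t) i) <= INR n * Mb * (d - (u - t))).
  { apply (vnorm_sub_le_of_deriv n z dz); [unfold t1 in *; lra| |].
    - intros c Hc i. apply deriv_of_deriv_nonneg; [lra|]. apply Dz. lra.
    - intros c Hc. apply velocity_le_Mb with (z c); [apply Hzball|apply Bz]; unfold t1 in *; lra. }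
  replace (d - (u - t)) with (t1 - u) in H by (unfold t1; ring).
  assert ((t1 - u) * vnorm m <= (t1 - u) * Mb) by (apply Rmult_le_compat_l; lra).
  unfold K. nra.
Qed.

Lemma into_chord_left u : u <= t0 -> into_chord u = x u /\ into_chord' u = dx u.
Proof.
  intro Hu. destruct (up_left u Hu) as [E E'].
  unfold into_chord, into_chord', blend, blend'. rewrite E, E'.
  split; apply functional_extensionality; intro; ring.
Qed.

Lemma off_chord_right u : t1 <= u -> off_chord u = zt u /\ off_chord' u = dzt u.
Proof.
  intro Hu. destruct (down_right u Hu) as [E E'].
  unfold off_chord, off_chord', blend, blend'. rewrite E, E'.
  split; apply functional_extensionality; intro; ring.
Qed.

Lemma chord_at_t : into_chord t = chord t /\ off_chord t = chord t /\ into_chord' t = m /\ off_chord' t = m.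
Proof.
  destruct up_t as [E1 E1']. destruct down_t as [E2 E2'].
  unfold into_chord, into_chord', off_chord, off_chord', blend, blend'. rewrite E1, E1', E2, E2'.
  repeat split; apply functional_extensionality; intro; ring.
Qed.

Lemma deriv_up u : t0 < u -> derivable_pt_lim up u (up' u).
Proof. intro. apply ramp_scaled_deriv; [lra|apply Rdiv_lt_0_compat; lra]. Qed.

Lemma deriv_down u : u < t1 -> derivable_pt_lim down u (down' u).
Proof.
  intro. apply ramp_scaled_deriv; [lra|].
  replace ((u - t1) / - d) with ((t1 - u) / d) by (field; lra). apply Rdiv_lt_0_compat; lra.
Qed.

Lemma deriv_into_chord u i : t0 < u -> derivable_pt_lim (fun s => into_chord s i) u (into_chord' u i).
Proof.
  intro Hu. apply blend_deriv; [|now apply deriv_up].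
  apply deriv_of_deriv_nonneg; [unfold t0 in *; lra|]. apply Dx. unfold t0 in *; lra.
Qed.

Lemma deriv_zt u i : t < u -> derivable_pt_lim (fun s => zt s i) u (dzt u i).
Proof.
  intro. apply (deriv_shift (fun s => z s i)). apply deriv_of_deriv_nonneg; [lra|]. apply Dz. lra.
Qed.

Lemma deriv_within_into_chord u i : t0 <= u <= t ->
  deriv_within (fun s => t0 <= s <= t) (fun s => into_chord s i) u (into_chord' u i).
Proof.
  intro Hu. destruct (Req_dec u t0) as [->|Hne].
  - destruct (into_chord_left t0 (Rle_refl _)) as [_ E]. rewrite E.
    apply deriv_within_blend_edge with d b d K; auto using K_ge0; try lra.
    + apply deriv_of_deriv_nonneg; [unfold t0; lra|]. apply Dx. unfold t0; lra.
    + apply (up_left t0 (Rle_refl _)).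
    + intros h Dh Hh. rewrite (Rabs_pos_eq h) in Hh |- * by lra.
      pose proof (up_range (t0 + h) ltac:(lra)). pose proof (up_le_powp h ltac:(unfold t0 in *; lra)). lra.
    + intros h Dh Hh. rewrite (Rabs_pos_eq h) in Hh |- * by lra.
      eapply Rle_trans; [apply (coord_le_vnorm _ (fun i => chord (t0 + h) i - x (t0 + h) i))|].
      eapply Rle_trans; [apply chord_sub_x; lra|]. right; ring.
  - apply deriv_within_of_deriv, deriv_into_chord. lra.
Qed.

Lemma deriv_within_off_chord u i : t <= u <= t1 ->
  deriv_within (fun s => t <= s <= t1) (fun s => off_chord s i) u (off_chord' u i).
Proof.
  intro Hu. destruct (Req_dec u t) as [->|Hne]; [|destruct (Req_dec u t1) as [->|Hne1]].
  - set (zext := fun s => if Rle_dec t s then zt s i else zt t i + dzt t i * (s - t)).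
    apply deriv_within_ext with (fun s => zext s + down s * (chord s i - zext s)); [| |].
    { intros s Hs. unfold zext, off_chord, blend. destruct Rle_dec; [auto|lra]. }
    { unfold t1; lra. }
    apply deriv_within_of_deriv.
    replace (off_chord' t i) with (dzt t i + down t * (m i - dzt t i) + down' t * (chord t i - zext t)).
    2:{ destruct down_t as [E E']. destruct chord_at_t as (_ & _ & _ & E2). rewrite E2, E, E'. ring. }
    apply blend_deriv; [|apply deriv_down; unfold t1; lra].
    apply right_deriv_tangent_extension.
    apply deriv_within_mono with (fun s => 0 <= s - t); [intros; lra|].
    apply (deriv_within_shift (fun s => 0 <= s) (fun s => z s i)).
    unfold dzt. rewrite Rminus_diag. apply Dz. lra.
  - destruct (off_chord_right t1 (Rle_refl _)) as [_ E]. rewrite E.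
    apply deriv_within_blend_edge with d b d K; auto using K_ge0; try lra.
    + apply deriv_zt. unfold t1; lra.
    + apply (down_right t1 (Rle_refl _)).
    + intros h Dh Hh. rewrite (Rabs_left1 h) in Hh |- * by (unfold t1 in *; lra).
      replace (t1 + h) with (t1 - - h) by ring.
      pose proof (down_range (t1 - - h) ltac:(lra)). pose proof (down_le_powp (- h) ltac:(unfold t1 in *; lra)). lra.
    + intros h Dh Hh. rewrite (Rabs_left1 h) in Hh |- * by (unfold t1 in *; lra).
      eapply Rle_trans; [apply (coord_le_vnorm _ (fun i => chord (t1 + h) i - zt (t1 + h) i))|].
      eapply Rle_trans; [apply chord_sub_zt; unfold t1 in *; lra|]. right; ring.
  - apply deriv_within_of_deriv, blend_deriv; [apply deriv_zt; lra|apply deriv_down; lra].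
Qed.

Lemma velocity_into_chord u : t0 <= u <= t -> vnorm (fun i => f (into_chord u) i - into_chord' u i) <= eps.
Proof.
  intro Hu. assert (Hx : vnorm (fun i => x u i - x t i) <= r) by (apply Hxball; unfold t0 in *; lra).
  assert (Hl : vnorm (fun i => chord u i - x t i) <= r) by (apply chord_in_ball; unfold t1; lra).
  pose proof (up_range u ltac:(lra)).
  apply blend_velocity_bound with (FX := f (x u)) (FL := f (chord u)) (k := k) (L := L); auto.
  - apply Bx. unfold t0 in *; lra.
  - apply Hlip; auto. apply ball_convex; auto.
  - apply Hlip; auto. apply ball_convex; auto.
  - pose proof (vnorm_sub_triangle n (chord u) (x t) (x u)). rewrite (vnorm_sub_sym _ (x t)) in H0.
    nra.
  - destruct (Req_dec u t0) as [->|Hne].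
    + destruct (up_left t0 (Rle_refl _)) as [E E']. rewrite E, E', Rabs_R0. lra.
    + pose proof (chord_sub_x u Hu). pose proof (up'_bound u ltac:(lra)). pose proof K_ge0.
      pose proof (Rabs_pos (up' u)).
      assert (Rabs (up' u) * vnorm (fun i => chord u i - x u i) <= K * (Rabs (up' u) * (u - t0)))
        by nra.
      assert (K * (Rabs (up' u) * (u - t0)) <= K * (2 * b * up u)) by (apply Rmult_le_compat_l; lra).
      unfold K in *. nra.
Qed.

Lemma velocity_off_chord u : t <= u <= t1 -> vnorm (fun i => f (off_chord u) i - off_chord' u i) <= eps.
Proof.
  intro Hu. assert (Hz : vnorm (fun i => zt u i - x t i) <= r) by (apply Hzball; unfold t1 in *; lra).
  assert (Hl : vnorm (fun i => chord u i - x t i) <= r) by (apply chord_in_ball; unfold t0, t1 in *; lra).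
  pose proof (down_range u ltac:(lra)).
  apply blend_velocity_bound with (FX := f (zt u)) (FL := f (chord u)) (k := k) (L := L); auto.
  - apply Bz. lra.
  - apply Hlip; auto. apply ball_convex; auto.
  - apply Hlip; auto. apply ball_convex; auto.
  - pose proof (vnorm_sub_triangle n (chord u) (x t) (zt u)). rewrite (vnorm_sub_sym _ (x t)) in H0.
    nra.
  - destruct (Req_dec u t) as [->|Hne]; [|destruct (Req_dec u t1) as [->|Hne1]].
    + destruct down_t as [E E']. rewrite E, E', Rabs_R0.
      pose proof K_ge0. unfold K in *. nra.
    + destruct (down_right t1 (Rle_refl _)) as [E E']. rewrite E, E', Rabs_R0. lra.
    + pose proof (chord_sub_zt u ltac:(lra)). pose proof (down'_bound u ltac:(lra)). pose proof K_ge0.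
      pose proof (Rabs_pos (down' u)).
      assert (Rabs (down' u) * vnorm (fun i => chord u i - zt u i) <= K * (Rabs (down' u) * (t1 - u)))
        by nra.
      assert (K * (Rabs (down' u) * (t1 - u)) <= K * (2 * b * down u)) by (apply Rmult_le_compat_l; lra).
      unfold K in *. nra.
Qed.

Lemma junction_solution :
  exists w, eps_solution f eps w /\ w 0 = x 0 /\ forall u, t + d <= u -> w u = z (u - t).
Proof.
  set (w := piecewise t into_chord off_chord). set (dw := piecewise t into_chord' off_chord').
  destruct chord_at_t as (Einto & Eoff & Einto' & Eoff').
  assert (W1 : forall s, s <= t0 -> w s = x s /\ dw s = dx s).
  { intros s Hs. unfold w, dw. rewrite !piecewise_le by (unfold t0 in *; lra). now apply into_chord_left. }
  assert (W2 : forall s, t0 <= s <= t -> w s = into_chord s /\ dw s = into_chord' s).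
  { intros s Hs. unfold w, dw. rewrite !piecewise_le by lra. auto. }
  assert (W3 : forall s, t <= s <= t1 -> w s = off_chord s /\ dw s = off_chord' s).
  { intros s Hs. unfold w, dw. destruct (Req_dec s t) as [->|Hne].
    - rewrite !piecewise_le by lra. rewrite Einto, Eoff, Einto', Eoff'. auto.
    - rewrite !piecewise_gt by lra. auto. }
  assert (W4 : forall s, t1 <= s -> w s = zt s /\ dw s = dzt s).
  { intros s Hs. unfold w, dw. rewrite !piecewise_gt by (unfold t1 in *; lra). now apply off_chord_right. }
  exists w. split; [exists dw; split|split].
  - intros u Hu i.
    apply (deriv_within_concat 0 t0 (fun s => w s i) (fun s => dw s i)); auto.
    { intros v Hv. apply deriv_within_piece with x dx; [intros; apply W1; lra|auto|].
      apply deriv_within_mono with (fun s => 0 <= s); [intros; lra|]. apply Dx. lra. }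
    apply (deriv_within_concat t0 t); [intros v Hv|].
    { apply deriv_within_piece with into_chord into_chord'; [intros; apply W2; lra|auto|].
      now apply deriv_within_into_chord. }
    apply (deriv_within_concat t t1); [intros v Hv|intros v Hv].
    { apply deriv_within_piece with off_chord off_chord'; [intros; apply W3; lra|auto|].
      now apply deriv_within_off_chord. }
    apply deriv_within_piece with zt dzt; [intros; apply W4; lra|auto|].
    apply deriv_within_mono with (fun s => 0 <= s - t); [intros; unfold t1 in *; lra|].
    apply (deriv_within_shift (fun s => 0 <= s) (fun s => z s i)). apply Dz. unfold t1 in *; lra.
  - intros u Hu.
    destruct (Rle_or_lt u t0) as [H1|H1].
    { destruct (W1 u H1) as [-> ->]. apply Bx. lra. }
    destruct (Rle_or_lt u t) as [H2|H2].
    { destruct (W2 u (conj (Rlt_le _ _ H1) H2)) as [-> ->]. apply velocity_into_chord. lra. }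
    destruct (Rle_or_lt u t1) as [H3|H3].
    { destruct (W3 u (conj (Rlt_le _ _ H2) H3)) as [-> ->]. apply velocity_off_chord. lra. }
    destruct (W4 u (Rlt_le _ _ H3)) as [-> ->]. apply Bz. unfold t1 in *; lra.
  - apply W1. unfold t0; lra.
  - intros u Hu. apply W4. auto.
Qed.

End Junction.

Lemma INR_div_succ_le n e : 0 <= e -> INR n * (e / (INR n + 1)) <= e.
Proof.
  intro. pose proof (pos_INR n).
  replace (INR n * (e / (INR n + 1))) with (e - e / (INR n + 1)) by (field; lra).
  assert (0 <= e / (INR n + 1)) by (apply Rmult_le_pos; [lra|left; apply Rinv_0_lt_compat; lra]).
  lra.
Qed.

Lemma vec_near_of_deriv_within n (D : R -> Prop) (x : R -> vec n) (dx : vec n) u :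
  (forall i, deriv_within D (fun s => x s i) u (dx i)) ->
  forall r, 0 < r -> exists eta, 0 < eta /\
    forall h, D (u + h) -> Rabs h < eta -> vnorm (fun i => x (u + h) i - x u i) <= r.
Proof.
  intros Hx r Hr. set (e := r / (INR n + 1)).
  assert (He : 0 < e) by (apply Rdiv_lt_0_compat; pose proof (pos_INR n); lra).
  destruct (fin_exists_pos_forall n (fun i eta => forall h, D (u + h) -> Rabs h < eta ->
              Rabs (x (u + h) i - x u i) <= e)) as [eta [Heta P]].
  { intros i d d' Hd H h Dh Hh. apply H; auto. lra. }
  { intro i. apply (deriv_within_cont D (fun s => x s i) u (dx i)); auto. }
  exists eta. split; auto. intros h Dh Hh.
  eapply Rle_trans; [apply vnorm_le_coord_bound; intro i; apply P; auto|].
  apply INR_div_succ_le. lra.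
Qed.

Lemma chord_slope_near n (x dx z dz : R -> vec n) t e :
  0 < t -> 0 < e -> z 0 = x t ->
  (forall i, deriv_nonneg (fun s => x s i) t (dx t i)) ->
  (forall i, deriv_nonneg (fun s => z s i) 0 (dz 0 i)) ->
  exists eta, 0 < eta /\ forall d, 0 < d < eta ->
    vnorm (fun i => (z d i - x (t - d) i) / (2 * d) - (dx t i + dz 0 i) / 2) <= e.
Proof.
  intros Ht He Hz Dx Dz. set (e0 := e / (INR n + 1)).
  assert (He0 : 0 < e0) by (apply Rdiv_lt_0_compat; pose proof (pos_INR n); lra).
  destruct (fin_exists_pos_forall n (fun i eta => forall d, 0 < d < eta ->
              Rabs ((z d i - x (t - d) i) / (2 * d) - (dx t i + dz 0 i) / 2) <= e0))
    as [eta [Heta P]].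
  { intros i d0 d' Hd H d Hdd. apply H. lra. }
  { intro i. destruct (Dz i e0 He0) as [d1 [Hd1 P1]]. destruct (Dx i e0 He0) as [d2 [Hd2 P2]].
    exists (Rmin d1 (Rmin d2 t)). split; [repeat apply Rmin_pos; auto|]. intros d Hd.
    pose proof (Rmin_l d1 (Rmin d2 t)); pose proof (Rmin_r d1 (Rmin d2 t)).
    pose proof (Rmin_l d2 t); pose proof (Rmin_r d2 t).
    specialize (P1 d ltac:(lra) ltac:(lra) ltac:(rewrite Rabs_pos_eq; lra)).
    specialize (P2 (- d) ltac:(lra) ltac:(lra) ltac:(rewrite Rabs_Ropp, Rabs_pos_eq; lra)).
    rewrite Rplus_0_l in P1. replace (t + - d) with (t - d) in P2 by ring.
    replace ((z d i - x (t - d) i) / (2 * d) - (dx t i + dz 0 i) / 2)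
      with (/ 2 * ((z d i - z 0 i) / d - dz 0 i) + / 2 * ((x (t - d) i - x t i) / - d - dx t i))
      by (rewrite Hz; field; lra).
    eapply Rle_trans; [apply Rabs_triang|]. rewrite !Rabs_mult, Rabs_pos_eq by lra. lra. }
  exists eta. split; auto. intros d Hd.
  eapply Rle_trans; [apply vnorm_le_coord_bound; intro i; apply P; auto|].
  apply INR_div_succ_le. lra.
Qed.

Lemma eps_solution_concat n (f : vec n -> vec n) eps (x dx z dz : R -> vec n) t :
  (forall u, 0 <= u -> forall i, deriv_nonneg (fun s => x s i) u (dx u i)) ->
  (forall u, 0 <= u -> vnorm (fun i => f (x u) i - dx u i) <= eps) ->
  (forall u, 0 <= u -> forall i, deriv_nonneg (fun s => z s i) u (dz u i)) ->
  (forall u, 0 <= u -> vnorm (fun i => f (z u) i - dz u i) <= eps) ->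
  0 < t -> z 0 = x t -> dx t = dz 0 ->
  exists w, eps_solution f eps w /\ w 0 = x 0 /\ forall u, t <= u -> w u = z (u - t).
Proof.
  intros Dx Bx Dz Bz Ht Hz Ha.
  set (w := piecewise t x (fun u => z (u - t))).
  set (dw := piecewise t dx (fun u => dz (u - t))).
  assert (W1 : forall s, s <= t -> w s = x s /\ dw s = dx s).
  { intros s Hs. unfold w, dw. now rewrite !piecewise_le. }
  assert (W2 : forall s, t <= s -> w s = z (s - t) /\ dw s = dz (s - t)).
  { intros s Hs. unfold w, dw. destruct (Req_dec s t) as [->|Hne].
    - rewrite !piecewise_le, Rminus_diag by lra. auto.
    - rewrite !piecewise_gt by lra. auto. }
  exists w. split; [exists dw; split|split].
  - intros u Hu i.
    apply (deriv_within_concat 0 t (fun s => w s i) (fun s => dw s i)); auto; intros v Hv.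
    + apply deriv_within_piece with x dx; [intros; apply W1; lra|auto|].
      apply deriv_within_mono with (fun s => 0 <= s); [intros; lra|]. apply Dx. lra.
    + apply deriv_within_piece with (fun s => z (s - t)) (fun s => dz (s - t));
        [intros; apply W2; lra|auto|].
      apply deriv_within_mono with (fun s => 0 <= s - t); [intros; lra|].
      apply (deriv_within_shift (fun s => 0 <= s) (fun s => z s i)). apply Dz. lra.
  - intros u Hu. destruct (Rle_or_lt u t) as [H|H].
    + destruct (W1 u H) as [-> ->]. apply Bx. lra.
    + destruct (W2 u (Rlt_le _ _ H)) as [-> ->]. apply Bz. lra.
  - apply W1. lra.
  - intros u Hu. apply W2. auto.
Qed.

Lemma smooth_lipschitz_small_ball n (f : vec n -> vec n) (p : vec n) e : smooth f -> 0 < e ->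
  exists r L, 0 < r /\ 0 <= L /\ L * r <= e /\ forall u v,
    vnorm (fun i => u i - p i) <= r -> vnorm (fun i => v i - p i) <= r ->
    vnorm (fun j => f u j - f v j) <= L * vnorm (fun i => u i - v i).
Proof.
  intros Hf He. destruct (smooth_locally_lipschitz n f p Hf) as [r0 [L [Hr0 [HL Lip]]]].
  pose proof (Rmin_l r0 (e / (L + 1))). pose proof (Rmin_r r0 (e / (L + 1))).
  exists (Rmin r0 (e / (L + 1))), L. repeat split; auto.
  - apply Rmin_pos; auto. apply Rdiv_lt_0_compat; lra.
  - apply Rle_trans with (L * (e / (L + 1))); [apply Rmult_le_compat_l; auto|].
    replace (L * (e / (L + 1))) with (e - e / (L + 1)) by (field; lra).
    assert (0 < e / (L + 1)) by (apply Rdiv_lt_0_compat; lra). lra.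
  - intros u v Hu Hv. apply Lip; lra.
Qed.

Lemma junction_scale n (x dx z dz : R -> vec n) t s r e :
  0 < t -> 0 < s -> 0 < r -> 0 < e -> z 0 = x t ->
  (forall i, deriv_nonneg (fun s => x s i) t (dx t i)) ->
  (forall i, deriv_nonneg (fun s => z s i) 0 (dz 0 i)) ->
  exists d, 0 < d < t /\ d <= s /\
    (forall c, t - d <= c <= t -> vnorm (fun i => x c i - x t i) <= r) /\
    (forall c, 0 <= c <= d -> vnorm (fun i => z c i - x t i) <= r) /\
    vnorm (fun i => (z d i - x (t - d) i) / (2 * d) - (dx t i + dz 0 i) / 2) <= e.
Proof.
  intros Ht Hs Hr He Hz Dx Dz.
  destruct (vec_near_of_deriv_within n (fun s => 0 <= s) x (dx t) t Dx r Hr) as [eA [HeA PA]].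
  destruct (vec_near_of_deriv_within n (fun s => 0 <= s) z (dz 0) 0 Dz r Hr) as [eB [HeB PB]].
  destruct (chord_slope_near n x dx z dz t e) as [eC [HeC PC]]; auto.
  set (d := Rmin (Rmin eA eB) (Rmin eC (Rmin t s)) / 2).
  assert (Hd : 0 < d) by (unfold d; apply Rdiv_lt_0_compat; [repeat apply Rmin_pos; auto|lra]).
  assert (d < eA /\ d < eB /\ d < eC /\ d < t /\ d <= s).
  { unfold d. pose proof (Rmin_l (Rmin eA eB) (Rmin eC (Rmin t s))).
    pose proof (Rmin_r (Rmin eA eB) (Rmin eC (Rmin t s))).
    pose proof (Rmin_l eA eB). pose proof (Rmin_r eA eB).
    pose proof (Rmin_l eC (Rmin t s)). pose proof (Rmin_r eC (Rmin t s)).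
    pose proof (Rmin_l t s). pose proof (Rmin_r t s). lra. }
  exists d. repeat split; try lra.
  - intros c Hc. replace c with (t + (c - t)) by ring.
    apply PA; [lra|rewrite Rabs_left1; lra].
  - intros c Hc. rewrite <- Hz. replace c with (0 + c) by ring.
    apply PB; [lra|rewrite Rabs_pos_eq; lra].
  - apply PC. lra.
Qed.

Lemma eps_solution_glue n (f : vec n -> vec n) eps (x z : R -> vec n) t s :
  smooth f -> eps_solution f eps x -> eps_solution f eps z ->
  0 < t -> 0 < s -> z 0 = x t ->
  exists w, eps_solution f eps w /\ w 0 = x 0 /\ w (t + s) = z s.
Proof.
  intros Hf [dx [Dx Bx]] [dz [Dz Bz]] Ht Hs Hz.
  destruct (classic (dx t = dz 0)) as [Ha|Ha].
  { destruct (eps_solution_concat n f eps x dx z dz t) as [w [Hw [W0 Wt]]]; auto.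
    exists w. split; [|split]; auto. rewrite Wt by lra. f_equal. ring. }
  set (M := fun i => (dx t i + dz 0 i) / 2).
  set (k := eps - vnorm (fun i => f (x t) i - M i)).
  assert (Hk : 0 < k).
  { enough (vnorm (fun i => f (x t) i - M i) < eps) by (unfold k; lra).
    apply midpoint_strict_in_ball; auto; [apply Bx; lra|].
    rewrite <- Hz. apply Bz. lra. }
  pose proof (vnorm_ge0 _ (fun i => f (x t) i - M i)).
  destruct (smooth_lipschitz_small_ball n f (x t) (k / 16) Hf) as [r [L [Hr [HL [HLr Lip]]]]];
    [lra|].
  assert (LipP : forall q, vnorm (fun i => q i - x t i) <= r ->
                 vnorm (fun i => f q i - f (x t) i) <= L * r).
  { intros q Hq. eapply Rle_trans; [apply Lip; auto|].
    - rewrite (vnorm_ext _ _ (fun _ => 0)), vnorm_zero by (intro; ring). lra.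
    - apply Rmult_le_compat_l; auto. }
  set (Mb := vnorm (f (x t)) + L * r + 2 * eps).
  set (K := Mb * (1 + INR n)).
  assert (HK : 0 <= K).
  { pose proof (vnorm_ge0 _ (f (x t))). pose proof (pos_INR n).
    apply Rmult_le_pos; unfold Mb, k in *; nra. }
  set (b := k / (8 * K + 1)).
  assert (Hbk : 2 * b * K <= k / 4).
  { unfold b. replace (2 * (k / (8 * K + 1)) * K) with (k / 4 - k / (4 * (8 * K + 1)))
      by (field; lra).
    assert (0 < k / (4 * (8 * K + 1))) by (apply Rdiv_lt_0_compat; lra). lra. }
  destruct (junction_scale n x dx z dz t s r (k / 4)) as (d & Hd & Hds & Bxr & Bzr & Hslope);
    auto; [lra|intro; apply Dx; lra|intro; apply Dz; lra|].
  set (m := fun i => (z d i - x (t - d) i) / (2 * d)).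
  destruct (junction_solution n f eps x dx z dz t d b k L r Mb m) as [w [Hw [W0 Wt]]]; auto.
  - intro i. unfold m. field. lra.
  - intros q Hq. pose proof (LipP q Hq).
    replace (fun i => f q i - m i)
      with (fun i => (f q i - f (x t) i) + (f (x t) i - M i) + - (m i - M i))
      by (apply functional_extensionality; intro; unfold M; ring).
    eapply Rle_trans; [apply vnorm_triangle|]. rewrite vnorm_opp.
    eapply Rle_trans; [apply Rplus_le_compat_r, vnorm_triangle|].
    unfold k, m, M in *. lra.
  - lra.
  - intros q Hq. pose proof (LipP q Hq). pose proof (vnorm_le_add_sub n (f (x t)) (f q)).
    unfold Mb, k in *. lra.
  - pose proof (vnorm_le_add_sub n M m).
    pose proof (vnorm_le_add_sub n (f (x t)) M) as HM. rewrite vnorm_sub_sym in HM.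
    pose proof (vnorm_ge0 _ (f (x t))).
    assert (0 <= L * r) by (apply Rmult_le_pos; lra).
    unfold k, Mb, m, M in *. lra.
  - apply Rdiv_lt_0_compat; lra.
  - exists w. split; [|split]; auto. rewrite Wt by lra. f_equal. ring.
Qed.

Lemma eps_solution_shift n (f : vec n -> vec n) eps (w : R -> vec n) c :
  0 <= c -> eps_solution f eps w -> eps_solution f eps (fun u => w (u + c)).
Proof.
  intros Hc [dw [Dw Bw]]. exists (fun u => dw (u + c)). split.
  - intros u Hu i e He. destruct (Dw (u + c) ltac:(lra) i e He) as [d [Hd P]].
    exists d. split; auto. intros h Hh H0 Ha.
    replace (u + h + c) with (u + c + h) by ring. apply P; auto. lra.
  - intros u Hu. apply Bw. lra.
Qed.

Lemma floor_multiple D T : 0 < D -> 0 <= T -> exists k : nat, INR k * D <= T < INR (S k) * D.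
Proof.
  intros HD HT. destruct (INR_archimed D T HD) as [N HN].
  induction N as [|N IH]; [simpl in HN; lra|].
  destruct (Rlt_or_le T (INR N * D)); [now apply IH|]. exists N. auto.
Qed.

Theorem lemma6 (n : nat) (f : vec n -> vec n) (eps : R) (V : vec n -> Prop) (Delta : R) :
  smooth f -> 0 <= eps -> 0 < Delta ->
  (forall y, Reach f eps (fun t => t = Delta) V y -> V y) ->
  forall Delta', Delta <= Delta' ->
  forall y, Reach f eps (fun _ => True) (Reach f eps (fun t => 0 <= t <= Delta') V) y ->
            Reach f eps (fun t => 0 <= t <= Delta') V y.
Proof.
  intros Hf _ HD Hinv D' HDD y [z [s [Hs [_ [Zs [[x [t [Ht [Htd [Xs [XV Ezx]]]]]] Ey]]]]]].
  assert (Hglued : exists w T, eps_solution f eps w /\ V (w 0) /\ 0 <= T /\ y = w T).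
  { destruct (Req_dec t 0) as [->|Ht0]; [exists z, s; rewrite Ezx; auto|].
    destruct (Req_dec s 0) as [->|Hs0]; [exists x, t; rewrite Ey, Ezx; auto|].
    destruct (eps_solution_glue n f eps x z t s) as [w [Ws [W0 WT]]]; auto; try lra.
    exists w, (t + s). rewrite W0, Ey, <- WT. repeat split; auto. lra. }
  destruct Hglued as [w [T [Ws [W0 [HT ->]]]]].
  assert (Vk : forall k : nat, V (w (INR k * Delta))).
  { induction k as [|k IH]; [simpl; rewrite Rmult_0_l; auto|].
    apply Hinv. exists (fun u => w (u + INR k * Delta)), Delta.
    pose proof (pos_INR k). repeat split; try lra.
    - apply eps_solution_shift; auto. nra.
    - now rewrite Rplus_0_l.
    - rewrite S_INR. f_equal. ring. }
  destruct (floor_multiple Delta T HD HT) as [k [Hk1 Hk2]]. rewrite S_INR in Hk2.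
  pose proof (pos_INR k).
  exists (fun u => w (u + INR k * Delta)), (T - INR k * Delta). repeat split; try lra.
  - apply eps_solution_shift; auto. nra.
  - now rewrite Rplus_0_l.
  - f_equal. ring.
Qed.
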